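(* Let $n\ge1$ with binary expansion $n=\sum_{i=1}^{\ell}2^{m_i}$, $\ell\ge1$, $m_1>\cdots>m_\ell$. Then: (a) $s(T^{gfb}_n)=n-1-(m_1-m_\ell)$; (b) for every $T\in\mathcal{T}_n$ with $\mathcal{C}(T)=c_n$ that is not isomorphic to $T^{gfb}_n$, one has $s(T)<s(T^{gfb}_n)$.
   Context: Bifurcating trees: rooted trees in which every internal node has exactly two children, considered up to isomorphism; $\mathcal{T}_n$ is the set of such trees with $n$ leaves. For a node $w$, $\kappa_T(w)$ is its number of descendant leaves. The Colless index is $\mathcal{C}(T)=\sum_{v}|\kappa_T(v_1)-\kappa_T(v_2)|$, summed over internal nodes $v$ with children $v_1,v_2$; $c_n=\min\{\mathcal{C}(T):T\in\mathcal{T}_n\}$. An internal node is a symmetry vertex if the subtrees rooted at its two children are isomorphic; $s(T)$ is the number of symmetry vertices of $T$. GFB trees: start with a multiset of $n$ single-node trees; while the multiset has more than one tree, remove a tree $u$ with the minimum number of leaves, then remove a tree $v$ with the minimum number of leaves among the remaining trees, and insert the tree consisting of a new root whose two children are the roots of $u$ and $v$; the final tree is the GFB tree $T^{gfb}_n$ (unique up to isomorphism). *)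

From mathcomp Require Import all_boot.
Set Implicit Arguments. Unset Strict Implicit. Unset Printing Implicit Defensive.

Inductive tree : Type := Leaf : tree | Node : tree -> tree -> tree.

Fixpoint leaves (t : tree) : nat :=
  match t with Leaf => 1 | Node l r => leaves l + leaves r end.

Fixpoint isob (t u : tree) : bool :=
  match t, u with
  | Leaf, Leaf => true
  | Node a b, Node c d => (isob a c && isob b d) || (isob a d && isob b c)
  | _, _ => false
  end.

(* Colless index: sum over internal nodes of |kappa(v1) - kappa(v2)| *)
Fixpoint colless (t : tree) : nat :=
  match t with
  | Leaf => 0
  | Node l r => ((leaves l - leaves r) + (leaves r - leaves l)) + colless l + colless r
  end.

Fixpoint symv (t : tree) : nat :=
  match t with
  | Leaf => 0
  | Node l r => isob l r + symv l + symv r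
  end.

(* C(T) = c_n where n = leaves T, i.e. T attains the minimum Colless index
   among all trees with the same number of leaves *)
Definition colless_minimal (t : tree) : Prop :=
  forall t', leaves t' = leaves t -> colless t <= colless t'.

Definition gfb_step (l : seq tree) : seq tree :=
  match sort (fun x y => leaves x <= leaves y) l with
  | u :: v :: r => Node u v :: r
  | l' => l'
  end.

Definition gfb (n : nat) : tree := head Leaf (iter n.-1 gfb_step (nseq n Leaf)).

From HB Require Import structures.
From mathcomp Require Import all_boot zify.
Set Implicit Arguments. Unset Strict Implicit.

(* Write [spread n] = m_1 - m_l for the distance between the highest and the
   lowest binary digit of n, and [crec] for the recursion c 1 = 0,
   c (2m) = 2 c m, c (2m+1) = c m + c (m+1) + 1.  Call a split of a + b
   leaves into parts a, b balanced if one part is a power of two and neither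
   exceeds twice the other, and a tree balanced if all its nodes split
   their leaves in a balanced way.  The proof rests on the estimate
        s(T) + spread n + 2 c n + 1 <= 2 C(T) + n        (tree_bound)
   for every tree T with n leaves, with equality exactly for balanced trees.
   It follows by induction on T from an inequality on a single split
   (pair_leqif), proved by strong induction on a + b along the parities of
   a and b, using subadditivity properties of c (crec_sub,
   crec_sub_strict).  Balanced trees are determined up to isomorphism by
   their size (balanced_tree_iso), and the GFB algorithm keeps an invariant
   showing that T^gfb_n is balanced (gfb_balanced).  Hence
   s(T^gfb_n) = n - 1 - spread n; a Colless-minimal T has C(T) <= C(T^gfb_n),
   so the estimate gives s(T) <= s(T^gfb_n), with equality only if T is
   balanced, i.e. isomorphic to T^gfb_n. *)

(* [lg n] and [val2 n] are the positions of the highest and of the lowest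
   binary digit of [n]; their difference [spread n] is m_1 - m_l when
   n = 2^m_1 + ... + 2^m_l. *)
Definition lg n := trunc_log 2 n.
Definition val2 n := logn 2 n.
Definition spread n := lg n - val2 n.
Definition is_pow2 n := n == 2 ^ lg n.

Lemma half_cases n : {m | n = 2 * m} + {m | n = (2 * m).+1}.
Proof.
case: (boolP (odd n)) => h; [right | left]; exists n./2;
  rewrite -[n in LHS]odd_double_half ?h ?(negbTE h); lia.
Qed.

Lemma lg1 : lg 1 = 0. Proof. exact: trunc_log1. Qed.

Lemma lg_double m : 0 < m -> lg (2 * m) = (lg m).+1.
Proof. by move=> m0; rewrite /lg -trunc_log2_double // -mul2n. Qed.

Lemma lg_double1 m : 0 < m -> lg (2 * m).+1 = (lg m).+1.
Proof.
move=> m0; rewrite /lg (trunc_log2S (n := (2 * m).+1)); last by lia.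
by have -> : (2 * m).+1./2 = m by lia.
Qed.

Lemma lg_bounds n : 0 < n -> 2 ^ lg n <= n < 2 ^ (lg n).+1.
Proof. by move=> n0; rewrite /lg trunc_logP // trunc_log_ltn. Qed.

Lemma lg0_eq1 n : 0 < n -> lg n = 0 -> n = 1.
Proof. by move=> n0 h; have := lg_bounds n0; rewrite h; lia. Qed.

Lemma lg_lt n : 0 < n -> lg n < n.
Proof.
move=> n0; have /andP [h _] := lg_bounds n0.
exact: leq_trans (ltn_expl _ (ltnSn 1)) h.
Qed.

Lemma lg_le2 n : 2 < n -> (lg n).+2 <= n.
Proof.
move=> n2; have /andP [h _] := lg_bounds (ltnW (ltnW n2)).
suff : lg n <= 1 \/ (lg n).+2 <= 2 ^ lg n by lia.
case: (lg n) => [|[|k]]; [by left | by left | right].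
by elim: k => [|k IH] //; rewrite expnS; lia.
Qed.

Lemma lg_le3 n : 2 < n -> 3 * lg n + 2 <= 2 * n.
Proof.
move=> n2; have /andP [h _] := lg_bounds (ltnW (ltnW n2)).
suff : lg n <= 1 \/ 3 * lg n + 2 <= 2 * 2 ^ lg n by lia.
case: (lg n) => [|[|k]]; [by left | by left | right].
by elim: k => [|k IH] //; rewrite expnS; lia.
Qed.

Lemma val2_double m : 0 < m -> val2 (2 * m) = (val2 m).+1.
Proof. by move=> m0; rewrite /val2 lognM // logn_prime. Qed.

Lemma val2_odd n : odd n -> val2 n = 0.
Proof. by move=> on; rewrite /val2 logn_coprime // coprime2n on. Qed.

Lemma pow2P n : reflect (exists k, n = 2 ^ k) (is_pow2 n).
Proof.
apply: (iffP eqP) => [->|[k ->]]; first by eauto.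
by rewrite /lg trunc_expnK.
Qed.

Lemma pow2_1 : is_pow2 1. Proof. by apply/pow2P; exists 0. Qed.

Lemma pow2_double n : is_pow2 (2 * n) = is_pow2 n.
Proof.
apply/pow2P/pow2P => [[[|k] hk]|[k ->]]; last by exists k.+1; rewrite expnS.
  by lia.
by exists k; rewrite expnS in hk; lia.
Qed.

Lemma pow2_double1 m : 0 < m -> is_pow2 (2 * m).+1 = false.
Proof.
move=> m0; apply/negbTE/negP => /pow2P [[|k] hk]; first by lia.
by move: (congr1 odd hk); rewrite /= oddM expnS oddM.
Qed.

Lemma pow2_cmp x y : is_pow2 x -> is_pow2 y -> x = y \/ 2 * x <= y \/ 2 * y <= x.
Proof.
case/pow2P => i -> /pow2P [j ->]; rewrite -!expnS !leq_exp2l //.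
by case: (ltngtP i j) => [h|h|->]; lia.
Qed.

Lemma lg_pow2_range x n : is_pow2 x -> x <= n < 2 * x -> lg n = lg x.
Proof.
case/pow2P => k -> h; rewrite /lg trunc_expnK //.
by apply: trunc_log_eq; rewrite // expnS.
Qed.

Lemma spread1 : spread 1 = 0. Proof. by rewrite /spread lg1 /val2 logn1. Qed.

Lemma spread_le_lg n : spread n <= lg n. Proof. exact: leq_subr. Qed.

Lemma spread_double m : 0 < m -> spread (2 * m) = spread m.
Proof. by move=> m0; rewrite /spread lg_double // val2_double. Qed.

Lemma spread_odd n : odd n -> spread n = lg n.
Proof. by move=> on; rewrite /spread val2_odd ?subn0. Qed.

Lemma spread_double1 m : 0 < m -> spread (2 * m).+1 = (lg m).+1.
Proof.
by move=> m0; rewrite spread_odd ?lg_double1 //= oddM.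
Qed.

Lemma spread_pow2 n : is_pow2 n -> spread n = 0.
Proof.
case/pow2P => k ->; rewrite /spread /lg /val2 trunc_expnK //.
by rewrite lognX logn_prime // eqxx muln1 subnn.
Qed.

Lemma spread0_pow2 n : 0 < n -> spread n = 0 -> is_pow2 n.
Proof.
elim/ltn_ind: n => n IH n0.
case: (half_cases n) => [[m hm]|[[|m] hm]]; subst n; last by rewrite spread_double1.
- have m0 : 0 < m by lia.
  by rewrite spread_double // pow2_double => /IH; apply; lia.
- by rewrite pow2_1.
Qed.

Lemma spread_succ m : 0 < m -> spread m.+1 <= lg m.
Proof.
move=> m0; case: (boolP (is_pow2 m.+1)) => h; first by rewrite spread_pow2.
suff <- : lg m.+1 = lg m by apply: spread_le_lg.
apply/eqP; rewrite eqn_leq [lg m <= _]leq_trunc_log // andbT.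
have /andP [h1 _] := lg_bounds (ltn0Sn m).
have h2 : 2 ^ lg m.+1 != m.+1 by apply: contra h => /eqP <-; apply/pow2P; eauto.
have h3 : 2 ^ lg m.+1 <= m by rewrite -ltnS ltn_neqAle h2 h1.
exact: trunc_log_max.
Qed.

(* The recursion c 1 = 0, c (2m) = 2 c m, c (2m+1) = c m + c (m+1) + 1 of
   the minimal Colless index c_n.  We never need that [crec n] is the minimum:
   only its recursion, the estimates below, and that it is the Colless index
   of the balanced trees. *)
Fixpoint crec_fuel (k n : nat) : nat :=
  match k with
  | 0 => 0
  | k'.+1 => if n <= 1 then 0 else
      if odd n then crec_fuel k' n./2 + crec_fuel k' (n./2).+1 + 1
      else 2 * crec_fuel k' n./2
  end.
Definition crec n := crec_fuel n n.

Lemma crec_fuel_enough k1 k2 n : n <= k1 -> n <= k2 -> crec_fuel k1 n = crec_fuel k2 n.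
Proof.
elim: k1 k2 n => [|k1 IH] [|k2] n h1 h2 //=; try by have -> : n <= 1 by lia.
have := odd_double_half n; case: ifP => // n1; case: ifP => on hn.
- by rewrite !(IH k2) //; lia.
- by rewrite (IH k2) //; lia.
Qed.

Lemma crec_fuelS k n : crec_fuel k.+1 n = if n <= 1 then 0 else
  if odd n then crec_fuel k n./2 + crec_fuel k (n./2).+1 + 1 else 2 * crec_fuel k n./2.
Proof. by []. Qed.

Lemma crec1 : crec 1 = 0. Proof. by []. Qed.

Lemma crec_double m : 0 < m -> crec (2 * m) = 2 * crec m.
Proof.
move=> m0; rewrite /crec.
have -> : crec_fuel (2 * m) (2 * m) = crec_fuel (2 * m).-1.+1 (2 * m).
  by congr crec_fuel; lia.
rewrite crec_fuelS oddM /= (_ : (2 * m <= 1) = false); last by lia.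
by rewrite (_ : (2 * m)./2 = m) ?(crec_fuel_enough (k2 := m)) //; lia.
Qed.

Lemma crec_double1 m : 0 < m -> crec (2 * m).+1 = crec m + crec m.+1 + 1.
Proof.
move=> m0; have odd_n : odd (2 * m).+1 = true by rewrite /= oddM.
rewrite /crec crec_fuelS odd_n (_ : (2 * m).+1 <= 1 = false); last by lia.
rewrite (_ : (2 * m).+1./2 = m); last by lia.
by rewrite (crec_fuel_enough (k2 := m)) ?(crec_fuel_enough (k1 := 2 * m) (k2 := m.+1)) //; lia.
Qed.

Lemma crec_succ a : 0 < a -> crec a.+1 <= crec a + lg a.
Proof.
elim/ltn_ind: a => a IH a0.
case: (half_cases a) => [[m hm]|[[|m] hm]]; subst a.
- have m0 : 0 < m by lia.
  rewrite crec_double1 // crec_double // lg_double //.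
  by have := IH m; lia.
- by [].
- rewrite (_ : (2 * m.+1).+2 = 2 * m.+2); last by lia.
  rewrite crec_double // crec_double1 // lg_double1 //.
  by have := IH m.+1; lia.
Qed.

(* [absd a b] is |a - b|, written as in the definition of [colless]. *)
Definition absd a b := (a - b) + (b - a).

Lemma sym_sum_ind (P : nat -> nat -> Prop) :
  (forall a b, P a b -> P b a) ->
  (forall a b, (forall x y, x + y < a + b -> P x y) -> b <= a -> P a b) ->
  forall a b, P a b.
Proof.
move=> Psym step a b; move: {2}(a + b) (erefl (a + b)) => s.
elim/ltn_ind: s a b => s IH a b hs.
have IH' x y : x + y < a + b -> P x y by rewrite hs => /IH; apply.
case: (leqP b a) => hab; first exact: step.
by apply: Psym; apply: step; [move=> x y; rewrite [b + a]addnC; apply: IH' | lia].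
Qed.

Lemma crec_sub a b : crec (a + b) <= crec a + crec b + absd a b.
Proof.
move: a b; apply: sym_sum_ind => [a b|a b IH ba]; first by rewrite addnC /absd; lia.
rewrite /absd; case: b IH ba => [|[|b]] IH ba; first by rewrite addn0; lia.
  by rewrite addn1 crec1; have := crec_succ (a := a); have := lg_lt (n := a); lia.
case: (eqVneq a b.+2) => [->|ab].
  by rewrite addnn -mul2n crec_double //; lia.
have {}ba : b.+2 < a by lia.
have IHa x y : x + y < a + b.+2 -> crec (x + y) <= crec x + crec y + absd x y by apply: IH.
case: (half_cases a) => [[x hx]|[x hx]]; case: (half_cases b.+2) => [[y hy]|[y hy]];
  rewrite hx hy; (have y0 : 0 < y by lia); (have x0 : 0 < x by lia);
  have xy0 : 0 < x + y by lia.
- rewrite (_ : 2 * x + 2 * y = 2 * (x + y)); last by lia.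
  rewrite !crec_double //.
  by have := IHa x y ltac:(lia); rewrite /absd; lia.
- rewrite (_ : 2 * x + (2 * y).+1 = (2 * (x + y)).+1); last by lia.
  rewrite crec_double // !crec_double1 // -[(x + y).+1]addnS.
  by have := IHa x y ltac:(lia); have := IHa x y.+1 ltac:(lia); rewrite /absd; lia.
- rewrite (_ : (2 * x).+1 + 2 * y = (2 * (x + y)).+1); last by lia.
  rewrite crec_double // !crec_double1 // -[(x + y).+1]addSn.
  by have := IHa x y ltac:(lia); have := IHa x.+1 y ltac:(lia); rewrite /absd; lia.
- rewrite (_ : (2 * x).+1 + (2 * y).+1 = 2 * (x + y).+1); last by lia.
  rewrite crec_double // !crec_double1 //.
  have := IHa x.+1 y ltac:(lia); have := IHa x y.+1 ltac:(lia).
  by rewrite /absd addnS addSn; lia.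
Qed.

(* When [a > 2 b], subadditivity is strict and the cost drops to [a - b]:
   such a split is never optimal. *)
Lemma crec_sub_strict a b : 0 < b -> 2 * b < a -> crec (a + b) < crec a + crec b + (a - b).
Proof.
elim/ltn_ind: a b => a IH [//|[|b]] _ ba.
  by rewrite addn1 crec1; have := crec_succ (a := a); have := lg_le2 (n := a); lia.
case: (half_cases a) => [[x hx]|[x hx]]; case: (half_cases b.+2) => [[y hy]|[y hy]];
  rewrite hx hy; (have y0 : 0 < y by lia); (have x0 : 0 < x by lia);
  have xy0 : 0 < x + y by lia.
- rewrite (_ : 2 * x + 2 * y = 2 * (x + y)); last by lia.
  rewrite !crec_double //.
  by have := IH x ltac:(lia) y y0; lia.
- rewrite (_ : 2 * x + (2 * y).+1 = (2 * (x + y)).+1); last by lia.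
  rewrite crec_double // !crec_double1 // -[(x + y).+1]addnS.
  by have := IH x ltac:(lia) y y0; have := crec_sub x y.+1; rewrite /absd; lia.
- rewrite (_ : (2 * x).+1 + 2 * y = (2 * (x + y)).+1); last by lia.
  rewrite crec_double // !crec_double1 // -[(x + y).+1]addSn.
  have := IH x ltac:(lia) y y0; have := IH x.+1 ltac:(lia) y y0.
  by have := crec_sub x y; have := crec_sub x.+1 y; rewrite /absd; lia.
- rewrite (_ : (2 * x).+1 + (2 * y).+1 = 2 * (x + y).+1); last by lia.
  rewrite crec_double // !crec_double1 //.
  by have := crec_sub x.+1 y; have := crec_sub x y.+1; rewrite /absd addnS addSn; lia.
Qed.

(* A split of [a + b] leaves into parts [a] and [b] is balanced when one part
   is a power of two and neither part exceeds twice the other; these are the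
   splits performed by the GFB algorithm. *)
Definition balanced a b := [&& is_pow2 a || is_pow2 b, a <= 2 * b & b <= 2 * a].

Lemma balancedC a b : balanced a b = balanced b a.
Proof. by rewrite /balanced orbC [(a <= _) && _]andbC. Qed.

Lemma balanced_double x y : balanced (2 * x) (2 * y) = balanced x y.
Proof.
by rewrite /balanced !pow2_double; congr (_ && _); apply/idP/idP => /andP [? ?]; lia.
Qed.

Lemma balanced_even_odd x y :
  0 < y -> balanced (2 * x) (2 * y).+1 -> [/\ is_pow2 x, balanced x y & balanced x y.+1].
Proof.
move=> y0 /and3P [p q r]; move: p; rewrite pow2_double1 // orbF pow2_double => px.
have xny : x != (2 * y).+1 by apply: contraTneq px => ->; rewrite pow2_double1.
by split; rewrite // /balanced px /=; apply/andP; split; lia.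
Qed.

Lemma balanced_odd_even x y :
  0 < x -> balanced (2 * x).+1 (2 * y) -> [/\ is_pow2 y, balanced x y & balanced x.+1 y].
Proof. by rewrite balancedC ![balanced _ y]balancedC => x0 /balanced_even_odd; apply. Qed.

Lemma balanced_odd_odd x y : 0 < x -> 0 < y -> balanced (2 * x).+1 (2 * y).+1 = false.
Proof. by move=> x0 y0; rewrite /balanced !pow2_double1. Qed.

Lemma balanced_unique a b a' b' : balanced a b -> balanced a' b' -> a + b = a' + b' ->
  (a = a' /\ b = b') \/ (a = b' /\ b = a').
Proof.
move=> /and3P [p q r] /and3P [p' q' r'] e.
by case/orP: p => p; case/orP: p' => p'; have := pow2_cmp p p'; lia.
Qed.

(* The potential [phi n]; the key estimate (tree_bound) is
   s(T) + phi n <= 2 C(T) + n for every tree T with n leaves. *)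
Definition phi n := spread n + 2 * crec n + 1.

(* The arithmetic heart of the key estimate, for one split of [a + b]
   leaves into [a] and [b]: the potential grows at most by the doubled
   imbalance (minus one for a possible symmetry vertex), with equality only
   for balanced splits. *)
Definition pair_ok a b : Prop :=
  phi (a + b) + (a == b) <= phi a + phi b + 2 * absd a b
  /\ (phi (a + b) + (a == b) = phi a + phi b + 2 * absd a b -> balanced a b).

Lemma pair_okC a b : pair_ok a b -> pair_ok b a.
Proof.
rewrite /pair_ok [b + a]addnC eq_sym balancedC.
by have -> : phi b + phi a + 2 * absd b a = phi a + phi b + 2 * absd a b by rewrite /absd; lia.
Qed.

Lemma pair_ok_diag a : 0 < a -> pair_ok a a.
Proof.
move=> a0; rewrite /pair_ok /phi eqxx addnn -mul2n spread_double // crec_double //.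
split; first by rewrite /absd; lia.
move=> h; have /spread0_pow2 pa : spread a = 0 by rewrite /absd in h; lia.
by rewrite /balanced (pa a0) /=; lia.
Qed.

Lemma pair_ok_lt a b :
  phi (a + b) + (a == b) < phi a + phi b + 2 * absd a b -> pair_ok a b.
Proof. by move=> h; split => [|e]; lia. Qed.

(* A split off a single leaf: tight only for 3 = 2 + 1, by [lg_le3]. *)
Lemma pair_ok_one a : 1 < a -> pair_ok a 1.
Proof.
move=> a1; have [->|a3] : a = 2 \/ 2 < a by lia.
  by split => // _; apply/and3P; split => //; apply/orP; left; apply/pow2P; exists 1.
apply: pair_ok_lt; rewrite addn1 /phi /absd spread1 crec1 gtn_eqF //.
have a0 : 0 < a by lia.
by have := crec_succ a0; have := spread_succ a0; have := lg_le3 a3; lia.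
Qed.

(* The four parity cases of a split with [2 <= b < a]: halving reduces them
   to smaller splits, via the recursions of [spread] and [crec]. *)
Lemma pair_ok_even_even x y : 0 < y -> y < x -> pair_ok x y -> pair_ok (2 * x) (2 * y).
Proof.
move=> y0 yx [h1 h2]; have x0 : 0 < x by lia.
rewrite /pair_ok -mulnDr -balanced_double in h1 h2 *.
move: h1 h2; rewrite /phi /absd !gtn_eqF ?ltn_pmul2l // !spread_double ?addn_gt0 ?x0 //.
rewrite !crec_double ?addn_gt0 ?x0 // => h1 h2.
have := crec_sub x y; rewrite /absd => h3.
by split => [|e]; [lia | apply: h2; lia].
Qed.

(* Here the split (x, y) controls the bound when [x + y] is odd, and the
   split (x, y + 1) when it is even. *)
Lemma pair_ok_even_odd x y :
  0 < y -> y < x -> pair_ok x y -> pair_ok x y.+1 -> pair_ok (2 * x) (2 * y).+1.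
Proof.
move=> y0 yx [h1 h2] [h1' h2']; have x0 : 0 < x by lia.
rewrite /pair_ok (_ : 2 * x + (2 * y).+1 = (2 * (x + y)).+1); last by lia.
rewrite gtn_eqF; last by lia.
rewrite /phi /absd spread_double // !spread_double1 ?addn_gt0 ?x0 //.
rewrite crec_double // !crec_double1 ?addn_gt0 ?x0 // -[(x + y).+1]addnS.
rewrite /phi /absd in h1 h1' h2 h2'.
have := crec_sub x y; have := crec_sub x y.+1; rewrite /absd => c1 c2.
have sy := spread_le_lg y.
case: (boolP (odd (x + y))) => oxy.
- have xy : (x == y) = false.
    by apply/negbTE; apply: contraTneq oxy => ->; rewrite addnn odd_double.
  rewrite xy spread_odd // in h1 h2.
  split => [|e]; first lia.
  have /and3P [p q r] := h2 ltac:(lia).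
  rewrite /balanced pow2_double; apply/and3P; split; [|lia|lia].
  case/orP: p => [-> //| p]; apply/orP; left.
  have y1 : y = 1 by apply: lg0_eq1; have := spread_pow2 p; lia.
  by rewrite (_ : x = 2); [apply/pow2P; exists 1 | lia].
- have sxy : spread (x + y.+1) = lg (x + y).+1 by rewrite spread_odd addnS //= oxy.
  have := crec_sub_strict (a := x) y0; have := spread_succ y0.
  have := leq_trunc_log 2 (leqnSn (x + y)); rewrite -!/(lg _) => l1 s1 c3.
  rewrite sxy in h1' h2'.
  split => [|e]; first lia.
  have /and3P [p q r] := h2' ltac:(lia).
  rewrite /balanced pow2_double; apply/and3P; split; [|lia|lia].
  case/orP: p => [-> //| p]; exfalso.
  have y1 : y = 1 by apply: lg0_eq1; have := spread_pow2 p; lia.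
  lia.
Qed.

Lemma pair_ok_odd_even x y :
  0 < y -> y <= x -> pair_ok x y -> pair_ok x.+1 y -> pair_ok (2 * x).+1 (2 * y).
Proof.
move=> y0 yx [h1 h2] [h1' h2']; have x0 : 0 < x by lia.
rewrite /pair_ok (_ : (2 * x).+1 + 2 * y = (2 * (x + y)).+1); last by lia.
rewrite gtn_eqF; last by lia.
rewrite /phi /absd spread_double // !spread_double1 ?addn_gt0 ?x0 //.
rewrite crec_double // !crec_double1 ?addn_gt0 ?x0 // -[(x + y).+1]addSn.
rewrite /phi /absd in h1 h2 h1' h2'; rewrite gtn_eqF ?ltnS // in h1' h2'.
have := crec_sub x y; have := crec_sub x.+1 y; rewrite /absd => c1 c2.
have sx := spread_le_lg x.
case: (boolP (odd (x + y))) => oxy.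
- have xy : (x == y) = false.
    by apply/negbTE; apply: contraTneq oxy => ->; rewrite addnn odd_double.
  have sx2 : x = 2 * y -> spread x < lg x.
    by move=> ->; rewrite spread_double // lg_double //; have := spread_le_lg y; lia.
  rewrite xy spread_odd // in h1 h2.
  split => [|e]; first lia.
  have /and3P [p q r] := h2 ltac:(lia).
  rewrite /balanced pow2_double; apply/and3P; split; [|lia|lia].
  case/orP: p => [p | -> //]; last by rewrite orbT.
  have x1 : x = 1 by apply: lg0_eq1; have := spread_pow2 p; lia.
  by move: oxy; rewrite x1 (_ : y = 1) //; lia.
- have sxy : spread (x.+1 + y) = lg (x + y).+1 by rewrite spread_odd addSn //= oxy.
  have := spread_succ x0; have := leq_trunc_log 2 (leqnSn (x + y)).
  rewrite -!/(lg _) sxy in h1' h2' * => l1 s1.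
  split => [|e]; first lia.
  have /and3P [p q r] := h2' ltac:(lia).
  rewrite /balanced pow2_double; apply/and3P; split; [|lia|lia].
  case/orP: p => [p | -> //]; last by rewrite orbT.
  have x1 : x = 1 by apply: lg0_eq1; have := spread_pow2 p; lia.
  by rewrite (_ : y = 1) ?pow2_1 ?orbT //; lia.
Qed.

(* Two odd parts are never balanced, and subadditivity alone gives a strict
   bound. *)
Lemma pair_ok_odd_odd x y : 0 < y -> y < x -> pair_ok (2 * x).+1 (2 * y).+1.
Proof.
move=> y0 yx; have x0 : 0 < x by lia.
apply: pair_ok_lt; rewrite gtn_eqF; last by lia.
rewrite (_ : (2 * x).+1 + (2 * y).+1 = 2 * (x + y).+1); last by lia.
rewrite /phi /absd spread_double // !spread_double1 // crec_double // !crec_double1 //.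
have := crec_sub x.+1 y; have := crec_sub x y.+1; rewrite /absd addnS addSn => c1 c2.
have := spread_le_lg (x + y).+1; have := lg_double x0.
have := leq_trunc_log 2 (_ : (x + y).+1 <= 2 * x); rewrite -!/(lg _) => l1 l2 s1.
have {}l1 := l1 ltac:(lia); lia.
Qed.

Lemma pair_bound a b : 0 < a -> 0 < b -> pair_ok a b.
Proof.
move: a b; apply: sym_sum_ind => [a b IH a0 b0 | a b IH ba a0 b0].
  exact/pair_okC/IH.
have [<-|ab] := eqVneq b a; first exact: pair_ok_diag.
have {ab}ba : b < a by rewrite ltn_neqAle ab.
have [b1|b2] : b = 1 \/ 1 < b by lia.
  by rewrite b1; apply: pair_ok_one; lia.
case: (half_cases a) => [[x hx]|[x hx]]; case: (half_cases b) => [[y hy]|[y hy]];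
  subst a b; have y0 : 0 < y by lia.
- by apply: pair_ok_even_even; try apply: IH; lia.
- by apply: pair_ok_even_odd; try apply: IH; lia.
- by apply: pair_ok_odd_even; try apply: IH; lia.
- by apply: pair_ok_odd_odd; lia.
Qed.

Lemma balanced_spread a b :
  0 < a -> 0 < b -> balanced a b -> spread (a + b) + (a == b) = spread a + spread b + 1.
Proof.
move: a b; apply: sym_sum_ind => [a b IH a0 b0 | a b IH ba a0 b0].
  by rewrite [b + a]addnC eq_sym balancedC [spread b + _]addnC; apply: IH.
have [<-|ab] := eqVneq b a.
  by rewrite /balanced orbb addnn -mul2n spread_double // => /and3P [/spread_pow2 ->].
have {ab}ba : b < a by rewrite ltn_neqAle ab.
have [b1|b2] : b = 1 \/ 1 < b by lia.
  subst b => /and3P [_ q _]; rewrite (_ : a = 2); last by lia.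
  by rewrite (spread_double1 (m := 1)) // (spread_double (m := 1)) // lg1 spread1.
case: (half_cases a) => [[x hx]|[x hx]]; case: (half_cases b) => [[y hy]|[y hy]];
  subst a b; (have y0 : 0 < y by lia); have x0 : 0 < x by lia.
- rewrite balanced_double -mulnDr => bxy.
  rewrite !spread_double ?addn_gt0 ?x0 //.
  by have := IH x y ltac:(lia) x0 y0 bxy; rewrite gtn_eqF //; lia.
- case/balanced_even_odd => // px /and3P [_ q _] _.
  rewrite (_ : 2 * x + (2 * y).+1 = (2 * (x + y)).+1); last by lia.
  rewrite !spread_double1 ?addn_gt0 ?x0 // spread_double // spread_pow2 //.
  have l1 : lg (x + y) = lg x by apply: lg_pow2_range => //; lia.
  have l2 : lg (2 * y) = lg x by apply: lg_pow2_range => //; lia.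
  by move: l2; rewrite lg_double //; lia.
- case/balanced_odd_even => // py _ /and3P [_ q _].
  rewrite (_ : (2 * x).+1 + 2 * y = (2 * (x + y)).+1); last by lia.
  rewrite !spread_double1 ?addn_gt0 ?x0 // spread_double // spread_pow2 //.
  have l1 : lg x = lg y by apply: lg_pow2_range => //; lia.
  have l2 : lg (x + y) = lg (2 * y) by apply: lg_pow2_range; rewrite ?pow2_double //; lia.
  by move: l2; rewrite lg_double //; lia.
- by rewrite balanced_odd_odd.
Qed.

Lemma balanced_crec a b :
  0 < a -> 0 < b -> balanced a b -> crec (a + b) = crec a + crec b + absd a b.
Proof.
move: a b; apply: sym_sum_ind => [a b IH a0 b0 | a b IH ba a0 b0].
  by rewrite [b + a]addnC balancedC /absd => /IH ->; rewrite // /absd; lia.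
rewrite /absd; have [<-|ab] := eqVneq b a.
  by rewrite addnn -mul2n crec_double //; lia.
have {ab}ba : b < a by rewrite ltn_neqAle ab.
have [b1|b2] : b = 1 \/ 1 < b by lia.
  by subst b => /and3P [_ q _]; rewrite (_ : a = 2) //; lia.
have IH' x y : x + y < a + b -> 0 < x -> 0 < y -> balanced x y ->
    crec (x + y) = crec x + crec y + ((x - y) + (y - x)) by exact: IH.
case: (half_cases a) => [[x hx]|[x hx]]; case: (half_cases b) => [[y hy]|[y hy]];
  subst a b; (have y0 : 0 < y by lia); have x0 : 0 < x by lia.
- rewrite balanced_double -mulnDr !crec_double ?addn_gt0 ?x0 // => bxy.
  by rewrite (IH' x y) //; lia.
- case/balanced_even_odd => // _ bxy bxy1.
  rewrite (_ : 2 * x + (2 * y).+1 = (2 * (x + y)).+1); last by lia.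
  rewrite !crec_double1 ?addn_gt0 ?x0 // crec_double // -[(x + y).+1]addnS.
  by rewrite (IH' x y) ?(IH' x y.+1) //; lia.
- case/balanced_odd_even => // _ bxy bx1y.
  rewrite (_ : (2 * x).+1 + 2 * y = (2 * (x + y)).+1); last by lia.
  rewrite !crec_double1 ?addn_gt0 ?x0 // crec_double // -[(x + y).+1]addSn.
  by rewrite (IH' x y) ?(IH' x.+1 y) //; lia.
- by rewrite balanced_odd_odd.
Qed.

Lemma pair_leqif a b : 0 < a -> 0 < b ->
  phi (a + b) + (a == b) <= phi a + phi b + 2 * absd a b ?= iff balanced a b.
Proof.
move=> a0 b0; have [le_ab eq_bal] := pair_bound a0 b0.
apply/leqifP; case: ifP => [bal | nbal]; last first.
  by rewrite ltn_neqAle le_ab andbT; apply: contraFN nbal => /eqP.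
have := balanced_spread a0 b0 bal; have := balanced_crec a0 b0 bal.
by rewrite /phi => c_eq s_eq; apply/eqP; lia.
Qed.

Fixpoint balanced_tree (t : tree) : bool :=
  match t with
  | Leaf => true
  | Node l r => [&& balanced (leaves l) (leaves r), balanced_tree l & balanced_tree r]
  end.

Lemma leaves_gt0 t : 0 < leaves t.
Proof. by elim: t => //= l IHl r IHr; rewrite addn_gt0 IHl. Qed.

Lemma isob_leaves t u : isob t u -> leaves t = leaves u.
Proof.
elim: t u => [|l IHl r IHr] [|l' r'] //= /orP [] /andP [/IHl -> /IHr ->] //.
exact: addnC.
Qed.

(* By [balanced_unique], a balanced tree is determined, up to isomorphism,
   by its number of leaves. *)
Lemma balanced_tree_iso t u :
  balanced_tree t -> balanced_tree u -> leaves t = leaves u -> isob t u.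
Proof.
elim: t u => [|l IHl r IHr] [|l' r'] //=.
- by move=> _ _ e; have := leaves_gt0 l'; have := leaves_gt0 r'; lia.
- by move=> _ _ e; have := leaves_gt0 l; have := leaves_gt0 r; lia.
move=> /and3P [b bl br] /and3P [b' bl' br'] e.
case: (balanced_unique b b' e) => [[e1 e2]|[e1 e2]].
- by rewrite (IHl l') // (IHr r').
- by rewrite (IHl r') // (IHr l') // orbT.
Qed.

Lemma balanced_isobE l r :
  balanced_tree l -> balanced_tree r -> isob l r = (leaves l == leaves r).
Proof.
move=> bl br; case: eqP => e; first exact: balanced_tree_iso.
by apply/negbTE/negP => /isob_leaves.
Qed.

Lemma tree_bound T :
  symv T + phi (leaves T) <= 2 * colless T + leaves T ?= iff balanced_tree T.
Proof.
elim: T => [|l IHl r IHr]; first by apply/leqifP; rewrite /phi spread1 crec1.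
have := pair_leqif (leaves_gt0 l) (leaves_gt0 r).
move: IHl IHr => /leqifP Hl /leqifP Hr /leqifP Hp; rewrite /absd in Hp.
have iso_le : isob l r <= (leaves l == leaves r).
  by case: (boolP (isob l r)) => // /isob_leaves ->; rewrite eqxx.
apply/leqifP; rewrite /=; case: ifP => [/and3P [bal bl br] | nbal].
- rewrite bal in Hp; rewrite bl in Hl; rewrite br in Hr.
  by rewrite balanced_isobE //; lia.
- move: nbal Hp Hl Hr; case: (balanced _ _); case: (balanced_tree l);
    case: (balanced_tree r) => //= _ Hp Hl Hr; lia.
Qed.

Lemma balanced_tree_symv T : balanced_tree T -> symv T + spread (leaves T) + 1 = leaves T.
Proof.
elim: T => [|l IHl r IHr] /=; first by rewrite spread1.
move=> /and3P [b bl br].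
have := balanced_spread (leaves_gt0 l) (leaves_gt0 r) b.
by rewrite balanced_isobE //; move: (IHl bl) (IHr br); lia.
Qed.

Lemma tree_eq_dec : comparable tree.
Proof. by move=> t u; rewrite /decidable; decide equality. Qed.

HB.instance Definition _ := hasDecEq.Build tree (compareP tree_eq_dec).

Definition off_pow2 (t : tree) := ~~ is_pow2 (leaves t).

Definition gfb_inv (l : seq tree) :=
  [/\ all balanced_tree l, {in l &, forall x y, leaves x <= 2 * leaves y}
    & count off_pow2 l <= 1].

Lemma gfb_inv_perm l l' : perm_eq l l' -> gfb_inv l' -> gfb_inv l.
Proof.
move=> pe [h1 h2 h3]; split; first by rewrite (perm_all _ pe).
- by move=> x y; rewrite !(perm_mem pe); apply: h2.
- by rewrite (permP pe).
Qed.

(* Merging the two smallest trees creates no second tree of size other than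
   a power of two: if a larger tree [y] is off the powers of two, [u] and [v]
   are powers of two, and [|u| <= |v| <= |y| <= 2|u|] forces [|u| = |v|],
   so [|u| + |v|] is a power of two. *)
Lemma merge_count u v r :
  leaves u <= leaves v ->
  (forall y, y \in r -> leaves v <= leaves y <= 2 * leaves u) ->
  count off_pow2 (u :: v :: r) <= 1 -> count off_pow2 (Node u v :: r) <= 1.
Proof.
rewrite /= => uv vr cnt.
case: (boolP (off_pow2 (Node u v))) => [uv_off | _]; last by move: cnt; lia.
suff -> : count off_pow2 r = 0 by [].
apply/eqP; rewrite -leqn0 leqNgt -has_count; apply/negP => /hasP [y yr y_off].
have r_on : 0 < count off_pow2 r by rewrite -has_count; apply/hasP; exists y.
have /negbFE pu : off_pow2 u = false by move: cnt r_on; lia.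
have /negbFE pv : off_pow2 v = false by move: cnt r_on; lia.
have /andP [vy yu] := vr y yr; have u0 := leaves_gt0 u.
case: (pow2_cmp pu pv) => [e | [e | e]].
- by move: uv_off; rewrite /off_pow2 /= e addnn -mul2n pow2_double pv.
- by move: y_off; rewrite /off_pow2 (_ : leaves y = leaves v) ?pv //; lia.
- lia.
Qed.

Lemma gfb_inv_merge u v r :
  leaves u <= leaves v -> (forall y, y \in r -> leaves v <= leaves y) ->
  gfb_inv (u :: v :: r) -> gfb_inv (Node u v :: r).
Proof.
move=> uv vr [/and3P [bu bv br] near cnt].
have in_u : u \in u :: v :: r by rewrite inE eqxx.
have in_v : v \in u :: v :: r by rewrite !inE eqxx orbT.
have in_r y : y \in r -> y \in u :: v :: r by move=> yr; rewrite !inE yr !orbT.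
have vu := near v u in_v in_u.
split.
- apply/andP; split; last exact: br.
  rewrite /= bu bv /balanced !andbT; apply/and3P; split; [move: cnt; rewrite /= /off_pow2 | |]; lia.
- move=> x y; rewrite !inE => /predU1P [-> | xr] /predU1P [-> | yr] /=.
  + lia.
  + by have := near u y in_u (in_r y yr); have := vr y yr; lia.
  + by have := near x u (in_r x xr) in_u; lia.
  + exact: near (in_r x xr) (in_r y yr).
- apply: merge_count cnt => // y yr; rewrite vr //=.
  exact: near (in_r y yr) in_u.
Qed.

Lemma gfb_step_inv l : gfb_inv l -> 1 < size l ->
  [/\ gfb_inv (gfb_step l), size (gfb_step l) = (size l).-1 &
      sumn (map leaves (gfb_step l)) = sumn (map leaves l)].
Proof.
move=> I sl; rewrite /gfb_step.
set R := (fun x y : tree => leaves x <= leaves y).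
have pe : perm_eq (sort R l) l by rewrite perm_sort.
have R_trans : transitive R by move=> x y z; exact: leq_trans.
have so : sorted R (sort R l) by apply: sort_sorted => x y; exact: leq_total.
have I' := gfb_inv_perm pe I.
have ss := size_sort R l.
have sm : sumn (map leaves (sort R l)) = sumn (map leaves l).
  by apply: perm_sumn; apply: perm_map.
move: I' ss sm so; case: (sort R l) => [|u [|v r]] /= I' ss sm; try by move: sl; rewrite -ss.
case/andP => uv so; split; last by rewrite -sm /= addnA.
- apply: gfb_inv_merge uv _ I' => y yr.
  exact: (allP (order_path_min R_trans so)).
- by rewrite -ss.
Qed.

Lemma gfb_iter_inv n k : k < n ->
  let l := iter k gfb_step (nseq n Leaf) in
  [/\ gfb_inv l, size l = n - k & sumn (map leaves l) = n].
Proof.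
elim: k => [|k IH] kn /=.
- split; last by rewrite map_nseq sumn_nseq mul1n.
  + split; first by apply/allP => x; rewrite mem_nseq => /andP [_ /eqP ->].
    * by move=> x y; rewrite !mem_nseq => /andP [_ /eqP ->] /andP [_ /eqP ->].
    * by rewrite count_nseq /off_pow2 (negbF pow2_1).
  + by rewrite size_nseq subn0.
- have [I s sm] := IH (ltnW kn).
  have sl : 1 < size (iter k gfb_step (nseq n Leaf)) by rewrite s; lia.
  have [I' s' sm'] := gfb_step_inv I sl.
  by split; [ | rewrite s' s; lia | rewrite sm'].
Qed.

Lemma gfb_balanced n : 0 < n -> balanced_tree (gfb n) /\ leaves (gfb n) = n.
Proof.
move=> n0; have lt_n : n.-1 < n by rewrite ltn_predL.
have [[all_bal _ _] s sm] := gfb_iter_inv lt_n.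
rewrite /gfb; move: all_bal s sm.
by case: (iter n.-1 gfb_step (nseq n Leaf)) => [|t [|t' r]] /=; lia.
Qed.

Lemma sum_pow2_desc ms : ms != [::] -> sorted gtn ms ->
  [/\ 2 ^ head 0 ms <= \sum_(m <- ms) 2 ^ m < 2 ^ (head 0 ms).+1,
      last 0 ms <= head 0 ms &
      exists2 q, odd q & \sum_(m <- ms) 2 ^ m = 2 ^ last 0 ms * q].
Proof.
elim: ms => [//|m [|m' ms] IH] _ /=.
  rewrite big_cons big_nil addn0 leqnn expnS ltn_Pmull ?expn_gt0 //.
  by split => //; exists 1; rewrite ?muln1.
case/andP => mm' so'; have [/andP [b1 b2] e1 [q oq eq]] := IH isT so'.
rewrite big_cons; move: b1 b2 e1 eq => /=.
set S := \sum_(j <- m' :: ms) 2 ^ j; set e := last m' ms => b1 b2 e1 eq.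
have mm : 2 ^ m'.+1 <= 2 ^ m by rewrite leq_exp2l.
split; [rewrite leq_addr expnS /=; lia | lia |].
exists (2 ^ (m - e) + q); first by rewrite oddD oddX oq (_ : (m - e == 0) = false) //; lia.
by rewrite mulnDr -expnD subnKC ?eq //; lia.
Qed.

Lemma spread_sum_pow2 ms : ms != [::] -> sorted gtn ms ->
  spread (\sum_(m <- ms) 2 ^ m) = head 0 ms - last 0 ms.
Proof.
move=> ne so; have [b _ [q oq eq]] := sum_pow2_desc ne so.
rewrite /spread /lg (trunc_log_eq _ b) // eq /val2 lognM ?expn_gt0 ?(odd_gt0 oq) //.
by rewrite lognX logn_prime // eqxx muln1 logn_coprime ?addn0 // coprime2n oq.
Qed.

Unset Implicit Arguments.

Theorem proposition8 (n : nat) (ms : seq nat) :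
  1 <= n ->
  ms != [::] ->
  sorted gtn ms ->
  n = \sum_(m <- ms) 2 ^ m ->
  symv (gfb n) = n - 1 - (head 0 ms - last 0 ms)
  /\ (forall T : tree, leaves T = n -> colless_minimal T ->
        ~~ isob T (gfb n) -> symv T < symv (gfb n)).
Proof.
move=> n_gt0 ms_ne ms_sorted n_sum.
have spread_n : spread n = head 0 ms - last 0 ms by rewrite n_sum spread_sum_pow2.
have [gfb_bal gfb_leaves] := gfb_balanced n_gt0.
have s_gfb := balanced_tree_symv gfb_bal; rewrite gfb_leaves spread_n in s_gfb.
split=> [|T T_leaves T_min T_niso]; first lia.
(* compare the key estimate for T with its equality case for the GFB tree *)
have [le_T eq_T] := tree_bound T; have [_ /eqP eq_gfb] := tree_bound (gfb n).
rewrite T_leaves in le_T eq_T; rewrite gfb_leaves gfb_bal in eq_gfb.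
have C_le : colless T <= colless (gfb n) by apply: T_min; rewrite gfb_leaves T_leaves.
rewrite ltn_neqAle; apply/andP; split; last lia.
(* equal symmetry counts would force equality for T, i.e. T balanced *)
apply: contra T_niso => /eqP s_eq.
apply: balanced_tree_iso => //; last by rewrite T_leaves gfb_leaves.
by rewrite -eq_T; apply/eqP; lia.
Qed.
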